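(* Let $L\subseteq\mathbb{R}^m$ be a lattice with covering radius $R$, and let $C\subseteq\mathbb{R}^m/L$ be finite. The following are equivalent: (i) $C$ is holy; (ii) for every $x,y\in C$ with $x\neq y$, $d(x,y)=R$; (iii) $\min\{d(x,y):x,y\in C,x\neq y\}=R$. Furthermore, (a) every holy code in $\mathbb{R}^m/L$ is optimal, and (b) if there exists a holy code of size $n$ in $\mathbb{R}^m/L$, then every optimal code of size $n$ in $\mathbb{R}^m/L$ is a holy code.
   Context: A lattice is a discrete full-rank subgroup of $\mathbb{R}^m$. The torus $\mathbb{R}^m/L$ has metric $d(x,y):=\min\{\|s-t\|_2:s\in x,t\in y\}$. An optimal code of size $n$ is an $n$-element subset of $\mathbb{R}^m/L$ maximizing the minimum distance between distinct points. The covering radius $R$ of $L$ is the supremum of $r$ such that $\mathbb{R}^m\setminus\bigcup_{x\in L}B(x,r)$ is nonempty; $z\in\mathbb{R}^m$ is a deep hole of $L$ if $\min\{\|z-x\|_2:x\in L\}=R$. A code $C=\{s+L:s\in S\}$ (with $S$ a set of representatives of distinct cosets) is holy if for all $s,t\in S$ with $s\neq t$, $s-t$ is a deep hole of $L$. *)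

From HB Require Import structures.
From mathcomp Require Import all_boot all_order all_algebra.
From mathcomp Require Import all_classical all_reals.
Set Implicit Arguments. Unset Strict Implicit. Unset Printing Implicit Defensive.
Import Order.TTheory GRing.Theory Num.Theory.
Local Open Scope classical_set_scope.
Local Open Scope ring_scope.

Section Defs.
Variables (R : realType) (m : nat).
Notation V := 'rV[R]_m.

Definition enorm (v : V) : R := Num.sqrt (\sum_(i < m) (v ord0 i) ^+ 2).

Definition ball_e (x : V) (r : R) : set V := [set y | enorm (y - x) < r].

Definition is_lattice (L : set V) : Prop :=
  [/\ L 0,
      (forall x y, L x -> L y -> L (x - y)),
      (forall x, L x -> exists2 e : R, 0 < e &
          forall y, L y -> enorm (y - x) < e -> y = x) &
      (forall v : V, exists k (l : 'I_k -> V) (c : 'I_k -> R),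
          (forall i, L (l i)) /\ v = \sum_(i < k) c i *: l i)].

(* the coset s + L, a point of the torus R^m/L *)
Definition coset (L : set V) (s : V) : set V := [set s + l | l in L].

Definition torus (L : set V) : set (set V) := [set X | exists s, X = coset L s].

(* torus metric d(X,Y) = min {||s - t|| : s in X, t in Y} (the min exists
   for a lattice; we write it as the infimum) *)
Definition tdist (X Y : set V) : R :=
  inf [set r | exists s t, [/\ X s, Y t & r = enorm (s - t)]].

Definition covrad (L : set V) : R :=
  sup [set r | exists z, forall x, L x -> ~ ball_e x r z].

Definition deep_hole (L : set V) (z : V) : Prop :=
  inf [set r | exists2 x, L x & r = enorm (z - x)] = covrad L.

Definition is_code (L : set V) (n : nat) (C : set (set V)) : Prop :=
  C `<=` torus L /\ (C #= `I_n)%card.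

Definition dists (C : set (set V)) : set R :=
  [set r | exists X Y, [/\ C X, C Y, X <> Y & r = tdist X Y]].

Definition mindist (C : set (set V)) : R := inf (dists C).

Definition optimal (L : set V) (n : nat) (C : set (set V)) : Prop :=
  is_code L n C /\ forall C', is_code L n C' -> mindist C' <= mindist C.

Definition holy (L : set V) (C : set (set V)) : Prop :=
  exists S : set V,
    [/\ C = [set coset L s | s in S],
        (forall s t, S s -> S t -> coset L s = coset L t -> s = t) &
        (forall s t, S s -> S t -> s <> t -> deep_hole L (s - t))].

End Defs.

From HB Require Import structures.
From mathcomp Require Import all_boot all_order all_algebra.
From mathcomp Require Import all_classical all_reals.
From mathcomp Require Import lra.
Import Order.TTheory GRing.Theory Num.Theory.
Local Open Scope classical_set_scope.
Local Open Scope ring_scope.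
Set Implicit Arguments. Unset Strict Implicit. Unset Printing Implicit Defensive.

(* The distance between the cosets s + L and t + L is the distance from s - t
   to L, which never exceeds the covering radius R, with equality exactly when
   s - t is a deep hole.  Hence a code is holy iff all its distances equal R,
   and such a code attains the largest minimum distance R that any code with
   at least two points can have. *)

Section TwoPoints.
Variable T : Type.

Definition has_two_points (C : set T) := exists X Y, [/\ C X, C Y & X <> Y].

Lemma card_le1_no_two_points (C : set T) :
  ~ has_two_points C -> (C #<= `I_1)%card.
Proof.
move=> no2; have [[X CX]|noX] := pselect (exists X, C X); last first.
  rewrite (_ : C = set0); first exact: card_ge0.
  by apply/seteqP; split => // Y CY; case: noX; exists Y.
rewrite -(card_le_eqr (@card_set1 _ X)); apply: subset_card_le => Y CY.
apply: contrapT => YX; apply: no2; exists X, Y; split => // eXY.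
by apply: YX; rewrite eXY.
Qed.

Lemma card_two_points n (C : set T) :
  (C #= `I_n)%card -> has_two_points C <-> (1 < n)%N.
Proof.
move=> /card_eqPle [Cn nC]; split.
  move=> [X [Y [CX CY XY]]].
  pose f (i : nat) := if i == 0%N then X else Y.
  have f_inj : {in `I_2 &, injective f}.
    move=> i j; rewrite !inE /= /f.
    by case: i => [|[|i]] //; case: j => [|[|j]] // _ _ eXY; exfalso; apply: XY.
  have : (`I_2 #<= `I_n)%card.
    rewrite -(card_le_eql (inj_card_eq f_inj)); apply: card_le_trans Cn.
    by apply: subset_card_le => _ [i _ <-]; rewrite /f; case: eqP.
  by rewrite card_le_II.
move=> n_gt1; apply: contrapT => /card_le1_no_two_points C_le1.
have := card_le_trans nC C_le1.
by rewrite card_le_II; case: n n_gt1 {Cn nC} => [|[|]].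
Qed.

End TwoPoints.

Section L1Norm.
Variables (R : realType) (m : nat).
Notation V := 'rV[R]_m.

Definition l1norm (v : V) : R := \sum_(i < m) `|v ord0 i|.

Lemma enorm_ge0 (v : V) : 0 <= enorm v.
Proof. exact: sqrtr_ge0. Qed.

Lemma l1norm_ge0 (v : V) : 0 <= l1norm v.
Proof. exact: sumr_ge0. Qed.

Lemma enorm_le_l1norm (v : V) : enorm v <= l1norm v.
Proof.
rewrite /enorm -[leRHS]ger0_norm ?l1norm_ge0 // -sqrtr_sqr; apply: ler_wsqrtr.
rewrite expr2 /l1norm mulr_suml; apply: ler_sum => i _.
rewrite -real_normK ?num_real // expr2; apply: ler_wpM2l => //.
by rewrite (bigD1 i) //= lerDl; apply: sumr_ge0.
Qed.

Lemma l1normZ (a : R) (v : V) : l1norm (a *: v) = `|a| * l1norm v.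
Proof. by rewrite /l1norm mulr_sumr; apply: eq_bigr => i _; rewrite mxE normrM. Qed.

Lemma l1norm_sum k (f : 'I_k -> V) :
  l1norm (\sum_(j < k) f j) <= \sum_(j < k) l1norm (f j).
Proof.
rewrite /l1norm exchange_big /=; apply: ler_sum => i _.
by rewrite summxE; apply: ler_norm_sum.
Qed.

End L1Norm.

Section Subgroup.
Variables (R : realType) (m : nat).
Notation V := 'rV[R]_m.
Variable L : set V.
Hypotheses (L0 : L 0) (LB : forall x y, L x -> L y -> L (x - y)).

Lemma subgroupN x : L x -> L (- x).
Proof. by move=> Lx; rewrite -sub0r; apply: LB. Qed.

Lemma subgroupD x y : L x -> L y -> L (x + y).
Proof. by move=> Lx Ly; rewrite -[y]opprK; apply/LB/subgroupN. Qed.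

Lemma subgroupMz x (k : int) : L x -> L (x *~ k).
Proof.
have LMn n : L x -> L (x *+ n).
  by move=> Lx; elim: n => [|n IH]; rewrite ?mulr0n // mulrS; apply: subgroupD.
by case: k => n Lx; [apply: LMn | rewrite NegzE mulrNz; apply/subgroupN/LMn].
Qed.

Lemma subgroup_sum k (f : 'I_k -> V) : (forall i, L (f i)) -> L (\sum_(i < k) f i).
Proof. by move=> Lf; apply: (big_ind L) => //; apply: subgroupD. Qed.

Definition lattice_dist (z : V) : R := inf [set r | exists2 x, L x & r = enorm (z - x)].

Lemma lattice_dist_le z x : L x -> lattice_dist z <= enorm (z - x).
Proof.
move=> Lx; apply: ge_inf; last by exists x.
by exists 0 => _ [y _ ->]; apply: enorm_ge0.
Qed.

Lemma lattice_dist_ge0 z : 0 <= lattice_dist z.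
Proof.
apply: lb_le_inf; first by exists (enorm (z - 0)), 0.
by move=> _ [x _ ->]; apply: enorm_ge0.
Qed.

Lemma tdist_coset s t : tdist (coset L s) (coset L t) = lattice_dist (s - t).
Proof.
rewrite /tdist /lattice_dist; congr inf; apply/seteqP; split => r /=.
  move=> [_ [_ [[l1 Ll1 <-] [l2 Ll2 <-] ->]]].
  by exists (l2 - l1); [apply: LB | rewrite opprB opprD addrACA].
move=> [x Lx ->]; exists (s + 0), (t + x); split; [by exists 0 | by exists x |].
by rewrite addr0 opprD addrA.
Qed.

End Subgroup.

Section Codes.
Variables (R : realType) (m : nat).
Notation V := 'rV[R]_m.
Implicit Type C : set (set V).

Definition equidistant (C : set (set V)) (r : R) :=
  forall X Y, C X -> C Y -> X <> Y -> tdist X Y = r.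

Lemma mindist_equidistant C r : has_two_points C -> equidistant C r -> mindist C = r.
Proof.
move=> [X [Y [CX CY XY]]] eqC; rewrite /mindist (_ : dists C = [set r]) ?inf1 //.
apply/seteqP; split => [_ [X' [Y' [CX' CY' XY' ->]]]|_ ->]; first exact: eqC.
by exists X, Y; split => //; rewrite eqC.
Qed.

Lemma mindist_no_two_points C : ~ has_two_points C -> mindist C = 0.
Proof.
move=> no2; rewrite /mindist (_ : dists C = set0) ?inf0 //.
by apply/seteqP; split => // r [X [Y [CX CY XY _]]]; apply: no2; exists X, Y.
Qed.

End Codes.

Section Lattice.
Variables (R : realType) (m : nat).
Notation V := 'rV[R]_m.
Variable L : set V.
Hypothesis HL : is_lattice L.

Let L0 : L 0. Proof. by case: HL. Qed.
Let LB x y : L x -> L y -> L (x - y). Proof. by case: HL => _ LB _ _; apply: LB. Qed.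

(* Round the coefficients of a * v on a spanning family of lattice vectors. *)
Lemma lattice_line_approx (v : V) :
  exists B : R, forall a : R, exists2 x, L x & l1norm (a *: v - x) <= B.
Proof.
case: HL => _ _ _ /(_ v) [k [l [c [Ll ->]]]].
exists (\sum_(i < k) l1norm (l i)) => a.
exists (\sum_(i < k) l i *~ Num.floor (a * c i)).
  by apply: subgroup_sum => // i; apply: subgroupMz.
rewrite scaler_sumr -sumrB; apply: le_trans (l1norm_sum _) _.
apply: ler_sum => i _; rewrite scalerA -scaler_int -scalerBl l1normZ.
rewrite -[leRHS]mul1r; apply: ler_wpM2r; first exact: l1norm_ge0.
have := floor_le (a * c i); have := floorD1_gt (a * c i); rewrite intrD.
by move=> ? ?; rewrite ger0_norm; lra.
Qed.

Lemma lattice_dist_bounded :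
  exists B : R, forall z : V, exists2 x, L x & enorm (z - x) <= B.
Proof.
have /choice [B approx] := fun j : 'I_m => lattice_line_approx (delta_mx ord0 j).
exists (\sum_(j < m) B j) => z.
have /choice [x Lx] : forall j, exists x,
    L x /\ l1norm (z ord0 j *: delta_mx ord0 j - x) <= B j.
  by move=> j; have [x ? ?] := approx j (z ord0 j); exists x.
exists (\sum_(j < m) x j); first by apply: subgroup_sum => // j; case: (Lx j).
apply: le_trans (enorm_le_l1norm _) _.
rewrite {1}(row_sum_delta z) -sumrB; apply: le_trans (l1norm_sum _) _.
by apply: ler_sum => j _; case: (Lx j).
Qed.

(* Without an upper bound the supremum defining covrad would be a junk value. *)
Lemma covrad_set_bounded :
  has_ubound [set r | exists z, forall x, L x -> ~ ball_e x r z].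
Proof.
have [B distB] := lattice_dist_bounded; exists B => r [z notin_ball].
have [x Lx zxB] := distB z.
by apply: le_trans zxB; rewrite leNgt; apply/negP/notin_ball.
Qed.

Lemma lattice_dist_le_covrad z : lattice_dist L z <= covrad L.
Proof.
apply: (ub_le_sup covrad_set_bounded); exists z => x Lx.
by apply/negP; rewrite -leNgt lattice_dist_le.
Qed.

Lemma tdist_le_covrad X Y : torus L X -> torus L Y -> tdist X Y <= covrad L.
Proof. by move=> [s ->] [t ->]; rewrite tdist_coset ?lattice_dist_le_covrad. Qed.

Lemma tdist_ge0 X Y : torus L X -> torus L Y -> 0 <= tdist X Y.
Proof. by move=> [s ->] [t ->]; rewrite tdist_coset ?lattice_dist_ge0. Qed.

Lemma holy_equidistant C : holy L C -> equidistant C (covrad L).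
Proof.
move=> [S [-> _ deep]] _ _ [s Ss <-] [t St <-] neq_st.
by rewrite tdist_coset //; apply: deep => // est; rewrite est in neq_st.
Qed.

Lemma equidistant_holy C : C `<=` torus L -> equidistant C (covrad L) -> holy L C.
Proof.
move=> Ct eqC.
have /choice [rep repE] : forall X, exists s, C X -> X = coset L s.
  by move=> X; have [/Ct [s ->]|] := pselect (C X); [exists s | exists 0].
exists (rep @` C); split.
- apply/seteqP; split => [X CX|_ [_ [Y CY <-] <-]]; last by rewrite -repE.
  by exists (rep X); [exists X | rewrite -repE].
- by move=> _ _ [X CX <-] [Y CY <-]; rewrite -repE // -repE // => ->.
- move=> _ _ [X CX <-] [Y CY <-] neq.
  rewrite /deep_hole -/(lattice_dist L _) -tdist_coset // -!repE //.
  by apply: eqC => // eXY; rewrite eXY in neq.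
Qed.

Lemma mindist_le_tdist C X Y :
  C `<=` torus L -> C X -> C Y -> X <> Y -> mindist C <= tdist X Y.
Proof.
move=> Ct CX CY XY; apply: ge_inf; last by exists X, Y.
by exists 0 => _ [X' [Y' [CX' CY' _ ->]]]; apply: tdist_ge0; apply: Ct.
Qed.

Lemma mindist_le_covrad C : C `<=` torus L -> has_two_points C -> mindist C <= covrad L.
Proof.
move=> Ct [X [Y [CX CY XY]]]; apply: le_trans (mindist_le_tdist Ct CX CY XY) _.
by apply: tdist_le_covrad; apply: Ct.
Qed.

Lemma equidistant_covrad_le_mindist C :
  C `<=` torus L -> covrad L <= mindist C -> equidistant C (covrad L).
Proof.
move=> Ct le_mindist X Y CX CY XY; apply/eqP.
rewrite eq_le (tdist_le_covrad (Ct _ CX) (Ct _ CY)) /=.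
exact: le_trans le_mindist (mindist_le_tdist Ct CX CY XY).
Qed.

Lemma equidistant_covradP C : C `<=` torus L -> has_two_points C ->
  equidistant C (covrad L) <-> dists C (covrad L) /\ lbound (dists C) (covrad L).
Proof.
move=> Ct [X [Y [CX CY XY]]]; split=> [eqC|[_ lbC] X' Y' CX' CY' XY'].
  split=> [|_ [X' [Y' [CX' CY' XY' ->]]]]; last by rewrite eqC.
  by exists X, Y; split => //; rewrite eqC.
apply/eqP; rewrite eq_le (tdist_le_covrad (Ct _ CX') (Ct _ CY')) /=.
by apply: lbC; exists X', Y'.
Qed.

End Lattice.

Theorem lemma4p9 (R : realType) (m : nat) (L : set 'rV[R]_m) :
  is_lattice L ->
  (forall C : set (set 'rV[R]_m), C `<=` torus L -> finite_set C ->
     (holy L C <->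
        (forall X Y, C X -> C Y -> X <> Y -> tdist X Y = covrad L)) /\
     ((exists X Y, [/\ C X, C Y & X <> Y]) ->
       ((forall X Y, C X -> C Y -> X <> Y -> tdist X Y = covrad L) <->
        (dists C (covrad L) /\ (forall r, dists C r -> covrad L <= r))))) /\
  (forall (n : nat) (C : set (set 'rV[R]_m)),
     is_code L n C -> holy L C -> optimal L n C) /\
  (forall n : nat,
     (exists C, is_code L n C /\ holy L C) ->
     forall C, optimal L n C -> holy L C).
Proof.
move=> HL; split; [|split].
-
  move=> C Ct _; split; last exact: equidistant_covradP.
  by split; [apply: holy_equidistant | apply: equidistant_holy].
- move=> n C [Ct Cn] holyC; split => // C' [C't C'n].
  have [two|no2] := pselect (has_two_points C).
    rewrite (mindist_equidistant two (holy_equidistant HL holyC)).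
    by apply: mindist_le_covrad => //; apply/(card_two_points C'n)/(card_two_points Cn).
  rewrite !mindist_no_two_points //.
  by move=> /(card_two_points C'n)/(card_two_points Cn).
- move=> n [C0 [[C0t C0n] holyC0]] C [[Ct Cn] optC].
  apply: equidistant_holy => //.
  have [two|no2] := pselect (has_two_points C); last first.
    by move=> X Y CX CY XY; case: no2; exists X, Y.
  have two0 : has_two_points C0 by apply/(card_two_points C0n)/(card_two_points Cn).
  apply: equidistant_covrad_le_mindist => //.
  by rewrite -(mindist_equidistant two0 (holy_equidistant HL holyC0)); apply: optC.
Qed.
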